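(* In the setting below, let $z_0=(u_0,v_0)$ be a singular point of $P$ with $k_1\neq0$. Then the determinant of the Hessian $H(z_0)$ of $\hat R$ with respect to the variables $(\theta_1',r_2',\theta_2')$ at $z_0$ is $$\det H(z_0)=-\frac{4(p-1)(q-1)|\mu|^2}{k_1^2\cos\Theta_2}\,\phi(z_0),\qquad \phi(z_0)=(-1)^\kappa(p-1)|v_0|\sin\Theta_3+(q-1)|\mu||u_0|\sin\Theta_1.$$
   Context: Fix integers $p,q\ge2$ and $\mu\in\mathbb{C}\setminus\{0\}$. Let $P(u,v;\mu)=\mu(u^p+\bar u)+v^q+\bar v$, regarded as a smooth map $\mathbb{R}^4\to\mathbb{R}^2$, with $Q=\operatorname{Re}P$, $R=\operatorname{Im}P$. A singular point is a point where the real differential of $P$ has rank $<2$; every singular point $z_0=(u_0,v_0)$ satisfies $u_0v_0\ne0$. Use polar coordinates $r_1=|u|,\theta_1=\arg u,r_2=|v|,\theta_2=\arg v$ near $z_0$. Fix real representatives $\arg u_0,\arg v_0,\arg\mu$ and an integer $\kappa$ with $\frac{p-1}{2}\arg u_0+\arg\mu=\frac{q-1}{2}\arg v_0+\kappa\pi$. Set $\Theta_1=\frac{p+1}{2}\arg u_0$, $\Theta_2=\frac{p-1}{2}\arg u_0+\arg\mu$, $\Theta_3=\frac{q+1}{2}\arg v_0$, $\Theta_4=\frac{q-1}{2}\arg v_0$, and $(k_1,k_2,k_3,k_4)=(\partial_{r_1}Q,\partial_{\theta_1}Q,\partial_{r_2}Q,\partial_{\theta_2}Q)(z_0)$. When $k_1\ne0$,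 define new coordinates $(r_1',\theta_1',r_2',\theta_2')=(k_1r_1+k_2\theta_1+k_3r_2+k_4\theta_2,\theta_1,r_2,\theta_2)$ near $z_0$, let $s=\frac{\partial R}{\partial r_1'}(z_0)$ and $\hat R=R-sQ$. *)

From Stdlib Require Import Reals ZArith ClassicalEpsilon ClassicalDescription.
Open Scope R_scope.

(** Derivative of a real function of one real variable at x:
    the (unique) l with derivable_pt_lim f x l, or 0 if f is not
    differentiable at x. *)
Definition Deriv (f : R -> R) (x : R) : R :=
  match excluded_middle_informative (exists l, derivable_pt_lim f x l) with
  | left H => proj1_sig (constructive_indefinite_description _ H)
  | right _ => 0
  end.

Definition fun4 := R -> R -> R -> R -> R.

Definition pd (k : nat) (f : fun4) : fun4 := fun a b c d =>
  match k with
  | 1%nat => Deriv (fun t => f t b c d) a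
  | 2%nat => Deriv (fun t => f a t c d) b
  | 3%nat => Deriv (fun t => f a b t d) c
  | 4%nat => Deriv (fun t => f a b c t) d
  | _ => 0
  end.

Definition Cx := (R * R)%type.
Definition Cadd (z w : Cx) : Cx := (fst z + fst w, snd z + snd w).
Definition Cmul (z w : Cx) : Cx :=
  (fst z * fst w - snd z * snd w, fst z * snd w + snd z * fst w).
Definition Cconj (z : Cx) : Cx := (fst z, - snd z).
Fixpoint Cpow (z : Cx) (n : nat) : Cx :=
  match n with O => (1, 0) | S n => Cmul z (Cpow z n) end.
Definition Cnorm (z : Cx) : R := sqrt (fst z ^ 2 + snd z ^ 2).
Definition Cpolar (r t : R) : Cx := (r * cos t, r * sin t).

Definition Pmap (p q : nat) (mu u v : Cx) : Cx :=
  Cadd (Cmul mu (Cadd (Cpow u p) (Cconj u))) (Cadd (Cpow v q) (Cconj v)).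

Definition Qcart (p q : nat) (mu : Cx) : fun4 :=
  fun x1 y1 x2 y2 => fst (Pmap p q mu (x1, y1) (x2, y2)).
Definition Rcart (p q : nat) (mu : Cx) : fun4 :=
  fun x1 y1 x2 y2 => snd (Pmap p q mu (x1, y1) (x2, y2)).

(** z0 = (u0,v0) is a singular point: the real 2x4 Jacobian of (Q,R) at z0
    has rank < 2, i.e. its two rows are linearly dependent. *)
Definition singular_point (p q : nat) (mu u0 v0 : Cx) : Prop :=
  exists a b : R, (a <> 0 \/ b <> 0) /\
    forall k : nat, (1 <= k <= 4)%nat ->
      a * pd k (Qcart p q mu) (fst u0) (snd u0) (fst v0) (snd v0)
      + b * pd k (Rcart p q mu) (fst u0) (snd u0) (fst v0) (snd v0) = 0.

Definition Qpol (p q : nat) (mu : Cx) : fun4 := fun r1 t1 r2 t2 =>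
  Qcart p q mu (r1 * cos t1) (r1 * sin t1) (r2 * cos t2) (r2 * sin t2).
Definition Rpol (p q : nat) (mu : Cx) : fun4 := fun r1 t1 r2 t2 =>
  Rcart p q mu (r1 * cos t1) (r1 * sin t1) (r2 * cos t2) (r2 * sin t2).

(** A function f of (r1,theta1,r2,theta2) expressed in the new coordinates
    (r1',theta1',r2',theta2') = (k1 r1 + k2 theta1 + k3 r2 + k4 theta2,
    theta1, r2, theta2)  (k1 <> 0). *)
Definition newcoords (k1 k2 k3 k4 : R) (f : fun4) : fun4 :=
  fun r1' t1' r2' t2' => f ((r1' - k2 * t1' - k3 * r2' - k4 * t2') / k1) t1' r2' t2'.

(** Hessian of f with respect to variables 2,3,4 (indices 0,1,2) at a point. *)
Definition hess234 (f : fun4) (a b c d : R) (i j : nat) : R :=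
  pd (i + 2) (pd (j + 2) f) a b c d.

Definition det3 (M : nat -> nat -> R) : R :=
  M 0%nat 0%nat * (M 1%nat 1%nat * M 2%nat 2%nat - M 1%nat 2%nat * M 2%nat 1%nat)
  - M 0%nat 1%nat * (M 1%nat 0%nat * M 2%nat 2%nat - M 1%nat 2%nat * M 2%nat 0%nat)
  + M 0%nat 2%nat * (M 1%nat 0%nat * M 2%nat 1%nat - M 1%nat 1%nat * M 2%nat 0%nat).

(* In polar coordinates Q and R are sums of a u-block and a v-block, each of the form
   Im (l e^(ib) (w^n + conj w)) with w = r e^(it).  At a singular point the real Jacobian of
   w |-> w^n + conj w degenerates, which forces n r^(n-1) = 1 for both blocks.  Then the
   sum-to-product formulas express all first and second partial derivatives at z0 through
   Theta1, Theta2, Theta3: in particular s = tan Theta2, and R - s Q is again a sum of two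
   blocks, whose phases differ from Theta2 by 0 and by kappa PI.
   The new coordinates only modify r1, so the Hessian of Rhat in (theta1', r2', theta2') is
   the Hessian of R - s Q restricted to the hyperplane orthogonal to (k1, k2, k3, k4).  For a
   block-diagonal Hessian diag(A, B) the determinant of this restriction is
   (adj A [k1, k2] det B + adj B [k3, k4] det A) / k1^2, which evaluates to the formula. *)

From Stdlib Require Import Reals ZArith Lra Lia ClassicalEpsilon ClassicalDescription.
From Stdlib Require Import FunctionalExtensionality.
From Coquelicot Require Import Hierarchy Derive AutoDerive.
Open Scope R_scope.

Lemma Deriv_is_derive (f : R -> R) (x l : R) : is_derive f x l -> Deriv f x = l.
Proof.
  intro H; apply is_derive_Reals in H; unfold Deriv.
  destruct excluded_middle_informative as [Hex | Hnex].
  - destruct constructive_indefinite_description as [l' Hl']; simpl.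
    exact (uniqueness_limite _ _ _ _ Hl' H).
  - exfalso; apply Hnex; eauto.
Qed.

Lemma is_derive_lincomb4 (f1 f2 f3 f4 : R -> R) (c1 c2 c3 c4 s d1 d2 d3 d4 d : R) :
  is_derive f1 s d1 -> is_derive f2 s d2 -> is_derive f3 s d3 -> is_derive f4 s d4 ->
  d = c1 * d1 + c2 * d2 + c3 * d3 + c4 * d4 ->
  is_derive (fun t => c1 * f1 t + c2 * f2 t + c3 * f3 t + c4 * f4 t) s d.
Proof.
  intros H1 H2 H3 H4 ->.
  apply (is_derive_plus (fun t => c1 * f1 t + c2 * f2 t + c3 * f3 t)); [|now apply is_derive_scal].
  apply (is_derive_plus (fun t => c1 * f1 t + c2 * f2 t)); [|now apply is_derive_scal].
  apply (is_derive_plus (fun t => c1 * f1 t)); now apply is_derive_scal.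
Qed.

Lemma cos2_sin2 (x : R) : cos x ^ 2 + sin x ^ 2 = 1.
Proof. rewrite <- (sin2_cos2 x); unfold Rsqr; ring. Qed.

Ltac expand_trig :=
  repeat rewrite ?sin_plus, ?cos_plus, ?sin_minus, ?cos_minus;
  rewrite ?sin_PI2, ?cos_PI2, ?sin_0, ?cos_0.

(** * Derivatives of curves in the complex plane *)

Definition is_derive_Cx (F : R -> Cx) (s : R) (D : Cx) : Prop :=
  is_derive (fun t => fst (F t)) s (fst D) /\ is_derive (fun t => snd (F t)) s (snd D).

Lemma is_derive_Cx_ext (F G : R -> Cx) (s : R) (D D' : Cx) :
  (forall t, F t = G t) -> D = D' -> is_derive_Cx F s D -> is_derive_Cx G s D'.
Proof.
  intros HFG <- [H1 H2]; split;
    (eapply is_derive_ext; [|eassumption]); intro t; cbv beta; now rewrite HFG.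
Qed.

Lemma is_derive_Cx_add (F G : R -> Cx) (s : R) (dF dG : Cx) :
  is_derive_Cx F s dF -> is_derive_Cx G s dG ->
  is_derive_Cx (fun t => Cadd (F t) (G t)) s (Cadd dF dG).
Proof.
  intros [F1 F2] [G1 G2]; split.
  - now apply (is_derive_plus (fun t => fst (F t))).
  - now apply (is_derive_plus (fun t => snd (F t))).
Qed.

Lemma is_derive_Cx_mul (F G : R -> Cx) (s : R) (dF dG : Cx) :
  is_derive_Cx F s dF -> is_derive_Cx G s dG ->
  is_derive_Cx (fun t => Cmul (F t) (G t)) s (Cadd (Cmul dF (G s)) (Cmul (F s) dG)).
Proof.
  intros [F1 F2] [G1 G2]; unfold Cmul, Cadd; split; cbn [fst snd].
  - replace (_ + _) with (fst dF * fst (G s) + fst (F s) * fst dG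
                         - (snd dF * snd (G s) + snd (F s) * snd dG)) by ring.
    apply (is_derive_minus (fun t => fst (F t) * fst (G t))); now apply is_derive_mult.
  - replace (_ + _) with (fst dF * snd (G s) + fst (F s) * snd dG
                         + (snd dF * fst (G s) + snd (F s) * fst dG)) by ring.
    apply (is_derive_plus (fun t => fst (F t) * snd (G t))); now apply is_derive_mult.
Qed.

Lemma is_derive_Cx_conj (F : R -> Cx) (s : R) (dF : Cx) :
  is_derive_Cx F s dF -> is_derive_Cx (fun t => Cconj (F t)) s (Cconj dF).
Proof. intros [F1 F2]; split; [exact F1 | now apply (is_derive_opp (fun t => snd (F t)))]. Qed.

Lemma is_derive_Cx_const (c : Cx) (s : R) : is_derive_Cx (fun _ => c) s (0, 0).
Proof. split; apply is_derive_Reals, derivable_pt_lim_const. Qed.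

Lemma is_derive_Cx_Cpow (F : R -> Cx) (n : nat) (s : R) (dF : Cx) :
  is_derive_Cx F s dF ->
  is_derive_Cx (fun t => Cpow (F t) n) s (Cmul (INR n, 0) (Cmul dF (Cpow (F s) (pred n)))).
Proof.
  intro HF; induction n as [|n IH].
  - split; cbn [Cpow fst snd Cmul]; apply is_derive_Reals;
      match goal with |- derivable_pt_lim _ _ ?v => replace v with 0 by (simpl; ring) end;
      apply derivable_pt_lim_const.
  - eapply (is_derive_Cx_ext (fun t => Cmul (F t) (Cpow (F t) n)));
      [reflexivity | | apply is_derive_Cx_mul; [exact HF | exact IH]].
    cbv beta; generalize (F s); intro w.
    destruct n as [|n].
    + destruct w, dF; unfold Cmul, Cadd; simpl; f_equal; ring.
    + change (Cpow w (pred (S n))) with (Cpow w n).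
      change (Cpow w (pred (S (S n)))) with (Cmul w (Cpow w n)).
      change (Cpow w (S n)) with (Cmul w (Cpow w n)).
      destruct (Cpow w n), w, dF; unfold Cmul, Cadd; cbn [fst snd]; rewrite !S_INR; f_equal; ring.
Qed.

Lemma is_derive_Cx_scale (c : Cx) (F : R -> Cx) (s : R) (dF : Cx) :
  is_derive_Cx F s dF -> is_derive_Cx (fun t => Cmul c (F t)) s (Cmul c dF).
Proof.
  intros [F1 F2]; unfold Cmul; split; cbn [fst snd].
  - apply (is_derive_minus (fun t => fst c * fst (F t))); now apply is_derive_scal.
  - apply (is_derive_plus (fun t => fst c * snd (F t))); now apply is_derive_scal.
Qed.

Definition dpow_conj (n : nat) (z h : Cx) : Cx :=
  Cadd (Cmul (INR n, 0) (Cmul h (Cpow z (pred n)))) (Cconj h).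

Lemma is_derive_Cx_pow_conj (F : R -> Cx) (n : nat) (s : R) (dF : Cx) :
  is_derive_Cx F s dF ->
  is_derive_Cx (fun t => Cadd (Cpow (F t) n) (Cconj (F t))) s (dpow_conj n (F s) dF).
Proof.
  intro HF; apply is_derive_Cx_add; [apply is_derive_Cx_Cpow | apply is_derive_Cx_conj]; exact HF.
Qed.

Lemma Cadd_0_r (z : Cx) : Cadd z (0, 0) = z.
Proof. destruct z; unfold Cadd; cbn [fst snd]; f_equal; ring. Qed.

Lemma Cadd_0_l (z : Cx) : Cadd (0, 0) z = z.
Proof. destruct z; unfold Cadd; cbn [fst snd]; f_equal; ring. Qed.

Lemma is_derive_Cx_Pmap_u (p q : nat) (mu v : Cx) (F : R -> Cx) (s : R) (dF : Cx) :
  is_derive_Cx F s dF ->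
  is_derive_Cx (fun t => Pmap p q mu (F t) v) s (Cmul mu (dpow_conj p (F s) dF)).
Proof.
  intro HF; eapply is_derive_Cx_ext; [reflexivity | apply Cadd_0_r |].
  apply is_derive_Cx_add;
    [apply is_derive_Cx_scale, is_derive_Cx_pow_conj, HF | apply is_derive_Cx_const].
Qed.

Lemma is_derive_Cx_Pmap_v (p q : nat) (mu u : Cx) (F : R -> Cx) (s : R) (dF : Cx) :
  is_derive_Cx F s dF ->
  is_derive_Cx (fun t => Pmap p q mu u (F t)) s (dpow_conj q (F s) dF).
Proof.
  intro HF; eapply is_derive_Cx_ext; [reflexivity | apply Cadd_0_l |].
  apply is_derive_Cx_add; [apply is_derive_Cx_const | apply is_derive_Cx_pow_conj, HF].
Qed.

Lemma Deriv_is_derive_Cx (F : R -> Cx) (s : R) (D : Cx) :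
  is_derive_Cx F s D -> (Deriv (fun t => fst (F t)) s, Deriv (fun t => snd (F t)) s) = D.
Proof.
  intros [H1 H2]; apply injective_projections; cbn [fst snd]; now apply Deriv_is_derive.
Qed.

Lemma pd_Pmap (p q : nat) (mu : Cx) (x1 y1 x2 y2 : R) :
  (pd 1 (Qcart p q mu) x1 y1 x2 y2, pd 1 (Rcart p q mu) x1 y1 x2 y2)
    = Cmul mu (dpow_conj p (x1, y1) (1, 0))
  /\ (pd 2 (Qcart p q mu) x1 y1 x2 y2, pd 2 (Rcart p q mu) x1 y1 x2 y2)
    = Cmul mu (dpow_conj p (x1, y1) (0, 1))
  /\ (pd 3 (Qcart p q mu) x1 y1 x2 y2, pd 3 (Rcart p q mu) x1 y1 x2 y2)
    = dpow_conj q (x2, y2) (1, 0)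
  /\ (pd 4 (Qcart p q mu) x1 y1 x2 y2, pd 4 (Rcart p q mu) x1 y1 x2 y2)
    = dpow_conj q (x2, y2) (0, 1).
Proof.
  assert (Hx : forall y s, is_derive_Cx (fun t => (t, y)) s (1, 0))
    by (split; cbn [fst snd]; auto_derive; auto).
  assert (Hy : forall x s, is_derive_Cx (fun t => (x, t)) s (0, 1))
    by (split; cbn [fst snd]; auto_derive; auto).
  unfold pd, Qcart, Rcart; split; [|split; [|split]]; apply Deriv_is_derive_Cx.
  - apply (is_derive_Cx_Pmap_u _ _ _ _ (fun t => (t, y1))), Hx.
  - apply (is_derive_Cx_Pmap_u _ _ _ _ (fun t => (x1, t))), Hy.
  - apply (is_derive_Cx_Pmap_v _ _ _ _ (fun t => (t, y2))), Hx.
  - apply (is_derive_Cx_Pmap_v _ _ _ _ (fun t => (x2, t))), Hy.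
Qed.

(** * Radii at a singular point *)

Definition cross (a b : Cx) : R := fst a * snd b - fst b * snd a.

Lemma cross_eq0_of_dependent (a b : R) (x y : Cx) :
  (a <> 0 \/ b <> 0) -> a * fst x + b * snd x = 0 -> a * fst y + b * snd y = 0 -> cross x y = 0.
Proof.
  unfold cross; intros [Ha | Hb] Hx Hy.
  - apply (Rmult_eq_reg_l a); [|exact Ha].
    replace (a * (fst x * snd y - fst y * snd x)) with
      ((a * fst x + b * snd x) * snd y - (a * fst y + b * snd y) * snd x) by ring.
    rewrite Hx, Hy; ring.
  - apply (Rmult_eq_reg_l b); [|exact Hb].
    replace (b * (fst x * snd y - fst y * snd x)) with
      ((a * fst y + b * snd y) * fst x - (a * fst x + b * snd x) * fst y) by ring.
    rewrite Hx, Hy; ring.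
Qed.

Lemma cross_Cmul (l x y : Cx) : cross (Cmul l x) (Cmul l y) = (fst l ^ 2 + snd l ^ 2) * cross x y.
Proof. unfold cross, Cmul; cbn [fst snd]; ring. Qed.

Lemma cross_dpow_conj (n : nat) (z : Cx) :
  cross (dpow_conj n z (1, 0)) (dpow_conj n z (0, 1))
  = INR n ^ 2 * (fst (Cpow z (pred n)) ^ 2 + snd (Cpow z (pred n)) ^ 2) - 1.
Proof. unfold cross, dpow_conj, Cadd, Cmul, Cconj; cbn [fst snd]; ring. Qed.

Lemma singular_point_cross (p q : nat) (mu u0 v0 : Cx) :
  singular_point p q mu u0 v0 ->
  (fst mu ^ 2 + snd mu ^ 2)
    * (INR p ^ 2 * (fst (Cpow u0 (pred p)) ^ 2 + snd (Cpow u0 (pred p)) ^ 2) - 1) = 0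
  /\ INR q ^ 2 * (fst (Cpow v0 (pred q)) ^ 2 + snd (Cpow v0 (pred q)) ^ 2) - 1 = 0.
Proof.
  intros [a [b [Hab H]]].
  destruct u0 as [x1 y1], v0 as [x2 y2].
  destruct (pd_Pmap p q mu x1 y1 x2 y2) as [H1 [H2 [H3 H4]]].
  rewrite <- cross_dpow_conj, <- cross_Cmul, <- cross_dpow_conj, <- H1, <- H2, <- H3, <- H4.
  split; apply cross_eq0_of_dependent with a b; cbn [fst snd]; auto; apply H; lia.
Qed.

Lemma Cpow_Cpolar (r t : R) (n : nat) : Cpow (Cpolar r t) n = Cpolar (r ^ n) (INR n * t).
Proof.
  induction n as [|n IH]; cbn [Cpow].
  - unfold Cpolar; rewrite Rmult_0_l, cos_0, sin_0; f_equal; simpl; ring.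
  - rewrite IH; unfold Cmul, Cpolar; cbn [fst snd].
    rewrite S_INR, Rmult_plus_distr_r, Rmult_1_l, (Rplus_comm _ t), cos_plus, sin_plus.
    f_equal; simpl; ring.
Qed.

Lemma Cpolar_norm2 (r t : R) : fst (Cpolar r t) ^ 2 + snd (Cpolar r t) ^ 2 = r ^ 2.
Proof.
  unfold Cpolar; cbn [fst snd].
  transitivity (r ^ 2 * (cos t ^ 2 + sin t ^ 2)); [ring|].
  rewrite cos2_sin2; ring.
Qed.

Lemma singular_point_polar_radii (p q : nat) (m a r1 t1 r2 t2 : R) :
  m <> 0 -> 0 <= r1 -> 0 <= r2 ->
  singular_point p q (Cpolar m a) (Cpolar r1 t1) (Cpolar r2 t2) ->
  INR p * r1 ^ pred p = 1 /\ INR q * r2 ^ pred q = 1.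
Proof.
  intros Hm Hr1 Hr2 Hsing.
  destruct (singular_point_cross _ _ _ _ _ Hsing) as [Hu Hv].
  rewrite Cpow_Cpolar, !Cpolar_norm2 in Hu; rewrite Cpow_Cpolar, Cpolar_norm2 in Hv.
  assert (Hm2 : m ^ 2 <> 0) by (apply pow_nonzero; exact Hm).
  assert (Hone : forall x, 0 <= x -> x ^ 2 = 1 -> x = 1) by (intros; nra).
  split; apply Hone.
  - apply Rmult_le_pos; [apply pos_INR | apply pow_le; exact Hr1].
  - apply Rminus_diag_uniq, (Rmult_eq_reg_l (m ^ 2)); [|exact Hm2].
    rewrite Rmult_0_r, <- Hu; ring.
  - apply Rmult_le_pos; [apply pos_INR | apply pow_le; exact Hr2].
  - apply Rminus_diag_uniq; rewrite <- Hv; ring.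
Qed.

(** * Directional derivatives and the new coordinates *)

Definition vec4 (x0 x1 x2 x3 : R) (i : nat) : R :=
  match i with 0 => x0 | 1 => x1 | 2 => x2 | _ => x3 end.

Definition line_derivative (f : fun4) (Df : (nat -> R) -> fun4) : Prop :=
  forall (x1 x2 x3 x4 : R) (u : nat -> R) (s : R),
  is_derive
    (fun t => f (x1 + t * u 0%nat) (x2 + t * u 1%nat) (x3 + t * u 2%nat) (x4 + t * u 3%nat)) s
    (Df u (x1 + s * u 0%nat) (x2 + s * u 1%nat) (x3 + s * u 2%nat) (x4 + s * u 3%nat)).

Lemma line_derivative_through (f : fun4) (Df : (nat -> R) -> fun4) :
  line_derivative f Df -> forall (y1 y2 y3 y4 : R) (u : nat -> R) (s : R),
  is_derive (fun t => f (y1 + (t - s) * u 0%nat) (y2 + (t - s) * u 1%nat)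
                        (y3 + (t - s) * u 2%nat) (y4 + (t - s) * u 3%nat)) s (Df u y1 y2 y3 y4).
Proof.
  intros Hf y1 y2 y3 y4 u s.
  pose proof
    (Hf (y1 - s * u 0%nat) (y2 - s * u 1%nat) (y3 - s * u 2%nat) (y4 - s * u 3%nat) u s) as H.
  replace (y1 - s * u 0%nat + s * u 0%nat) with y1 in H by ring.
  replace (y2 - s * u 1%nat + s * u 1%nat) with y2 in H by ring.
  replace (y3 - s * u 2%nat + s * u 2%nat) with y3 in H by ring.
  replace (y4 - s * u 3%nat + s * u 3%nat) with y4 in H by ring.
  eapply is_derive_ext; [|exact H].
  intro t; cbv beta; f_equal; ring.
Qed.

(* Moving the j-th new coordinate moves (r1, theta1, r2, theta2) along [newcoords_dir j]. *)
Definition newcoords_dir (k1 k2 k3 k4 : R) (j : nat) : nat -> R :=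
  match j with
  | 1 => vec4 (/ k1) 0 0 0
  | 2 => vec4 (- k2 / k1) 1 0 0
  | 3 => vec4 (- k3 / k1) 0 1 0
  | _ => vec4 (- k4 / k1) 0 0 1
  end.

Lemma pd_newcoords (f : fun4) (Df : (nat -> R) -> fun4) (k1 k2 k3 k4 : R) (j : nat) :
  line_derivative f Df -> (1 <= j <= 4)%nat ->
  pd j (newcoords k1 k2 k3 k4 f) = newcoords k1 k2 k3 k4 (Df (newcoords_dir k1 k2 k3 k4 j)).
Proof.
  intros Hf Hj.
  apply functional_extensionality; intro w; apply functional_extensionality; intro b;
  apply functional_extensionality; intro c; apply functional_extensionality; intro d.
  destruct j as [|[|[|[|[|j]]]]]; try lia;
    unfold pd, newcoords; apply Deriv_is_derive;
    (eapply is_derive_ext; [|apply line_derivative_through, Hf]);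
    intro t; cbn [newcoords_dir vec4]; f_equal; unfold Rdiv; ring.
Qed.

Lemma hess234_newcoords (f : fun4) (Df : (nat -> R) -> fun4)
  (D2f : (nat -> R) -> (nat -> R) -> fun4)
  (k1 k2 k3 k4 w b c d : R) (i j : nat) :
  line_derivative f Df -> (forall v, line_derivative (Df v) (fun u => D2f u v)) ->
  (i < 3)%nat -> (j < 3)%nat ->
  hess234 (newcoords k1 k2 k3 k4 f) w b c d i j
  = newcoords k1 k2 k3 k4
      (D2f (newcoords_dir k1 k2 k3 k4 (i + 2)) (newcoords_dir k1 k2 k3 k4 (j + 2))) w b c d.
Proof.
  intros Hf HDf Hi Hj; unfold hess234.
  rewrite (pd_newcoords f Df); [|exact Hf|lia].
  rewrite (pd_newcoords _ (fun u => D2f u (newcoords_dir k1 k2 k3 k4 (j + 2))));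
    [reflexivity | apply HDf | lia].
Qed.

Definition unit_dir (j : nat) : nat -> R :=
  match j with
  | 1 => vec4 1 0 0 0
  | 2 => vec4 0 1 0 0
  | 3 => vec4 0 0 1 0
  | _ => vec4 0 0 0 1
  end.

Lemma pd_line_derivative (f : fun4) (Df : (nat -> R) -> fun4) (x1 x2 x3 x4 : R) (j : nat) :
  line_derivative f Df -> (1 <= j <= 4)%nat -> pd j f x1 x2 x3 x4 = Df (unit_dir j) x1 x2 x3 x4.
Proof.
  intros Hf Hj.
  destruct j as [|[|[|[|[|j]]]]]; try lia;
    unfold pd; apply Deriv_is_derive;
    (eapply is_derive_ext; [|apply line_derivative_through, Hf]);
    intro t; cbn [unit_dir vec4]; f_equal; ring.
Qed.

Definition hess_form (h11 h12 h22 u1 u2 v1 v2 : R) : R :=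
  u1 * (h11 * v1 + h12 * v2) + u2 * (h12 * v1 + h22 * v2).

Definition det2 (h11 h12 h22 : R) : R := h11 * h22 - h12 ^ 2.

Definition adj_quad (h11 h12 h22 x y : R) : R := h22 * x ^ 2 - 2 * h12 * x * y + h11 * y ^ 2.

(* The bordered-Hessian identity for the restriction of diag(A, C) to the hyperplane
   orthogonal to (k1, k2, k3, k4). *)
Lemma det3_block_hessian_newcoords (k1 k2 k3 k4 a11 a12 a22 c11 c12 c22 : R) :
  k1 <> 0 ->
  let e := newcoords_dir k1 k2 k3 k4 in
  det3 (fun i j =>
    hess_form a11 a12 a22 (e (i + 2)%nat 0%nat) (e (i + 2)%nat 1%nat)
      (e (j + 2)%nat 0%nat) (e (j + 2)%nat 1%nat)
    + hess_form c11 c12 c22 (e (i + 2)%nat 2%nat) (e (i + 2)%nat 3%nat)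
      (e (j + 2)%nat 2%nat) (e (j + 2)%nat 3%nat))
  = (adj_quad a11 a12 a22 k1 k2 * det2 c11 c12 c22
     + adj_quad c11 c12 c22 k3 k4 * det2 a11 a12 a22) / k1 ^ 2.
Proof.
  intros Hk1 e; subst e.
  unfold det3, hess_form, adj_quad, det2; cbn [Nat.add newcoords_dir vec4].
  field; exact Hk1.
Qed.

Lemma det3_ext (M N : nat -> nat -> R) :
  (forall i j, (i < 3)%nat -> (j < 3)%nat -> M i j = N i j) -> det3 M = det3 N.
Proof. intro H; unfold det3; rewrite !H by lia; reflexivity. Qed.

(** * Polar blocks *)

(* [im_block n l b r t] is Im (l e^(ib) (w^n + conj w)) for w = r e^(it); the real part is
   [im_block n l (b + PI / 2) r t]. *)
Definition im_block (n : nat) (l b r t : R) : R :=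
  l * (r ^ n * sin (INR n * t + b) + r * sin (b - t)).

Definition im_block_dr (n : nat) (l b r t : R) : R :=
  l * (INR n * r ^ pred n * sin (INR n * t + b) + sin (b - t)).
Definition im_block_dt (n : nat) (l b r t : R) : R :=
  l * (INR n * r ^ n * cos (INR n * t + b) - r * cos (b - t)).
Definition im_block_drr (n : nat) (l b r t : R) : R :=
  l * (INR n * INR (pred n) * r ^ pred (pred n) * sin (INR n * t + b)).
Definition im_block_drt (n : nat) (l b r t : R) : R :=
  l * (INR n * INR n * r ^ pred n * cos (INR n * t + b) - cos (b - t)).
Definition im_block_dtt (n : nat) (l b r t : R) : R :=
  - l * (INR n * INR n * r ^ n * sin (INR n * t + b) + r * sin (b - t)).

Ltac solve_line_derive :=
  intros; auto_derive; [auto |];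
  unfold im_block_dr, im_block_dt, im_block_drr, im_block_drt, im_block_dtt, Rminus; ring.

Section BlockLines.
Variables (n : nat) (l b r t u1 u2 s : R).

Lemma is_derive_im_block_line :
  is_derive (fun x => im_block n l b (r + x * u1) (t + x * u2)) s
    (u1 * im_block_dr n l b (r + s * u1) (t + s * u2)
     + u2 * im_block_dt n l b (r + s * u1) (t + s * u2)).
Proof. unfold im_block; solve_line_derive. Qed.

Lemma is_derive_im_block_dr_line :
  is_derive (fun x => im_block_dr n l b (r + x * u1) (t + x * u2)) s
    (u1 * im_block_drr n l b (r + s * u1) (t + s * u2)
     + u2 * im_block_drt n l b (r + s * u1) (t + s * u2)).
Proof. unfold im_block_dr; solve_line_derive. Qed.

Lemma is_derive_im_block_dt_line :
  is_derive (fun x => im_block_dt n l b (r + x * u1) (t + x * u2)) s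
    (u1 * im_block_drt n l b (r + s * u1) (t + s * u2)
     + u2 * im_block_dtt n l b (r + s * u1) (t + s * u2)).
Proof. unfold im_block_dt; solve_line_derive. Qed.
End BlockLines.

Section TwoBlocks.
Variables (n1 : nat) (l1 b1 : R) (n2 : nat) (l2 b2 : R).

Definition two_blocks : fun4 := fun r1 t1 r2 t2 =>
  im_block n1 l1 b1 r1 t1 + im_block n2 l2 b2 r2 t2.

Definition two_blocks_dir (v : nat -> R) : fun4 := fun r1 t1 r2 t2 =>
  v 0%nat * im_block_dr n1 l1 b1 r1 t1 + v 1%nat * im_block_dt n1 l1 b1 r1 t1
  + v 2%nat * im_block_dr n2 l2 b2 r2 t2 + v 3%nat * im_block_dt n2 l2 b2 r2 t2.

Definition two_blocks_dir2 (u v : nat -> R) : fun4 := fun r1 t1 r2 t2 =>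
  hess_form (im_block_drr n1 l1 b1 r1 t1) (im_block_drt n1 l1 b1 r1 t1)
    (im_block_dtt n1 l1 b1 r1 t1) (u 0%nat) (u 1%nat) (v 0%nat) (v 1%nat)
  + hess_form (im_block_drr n2 l2 b2 r2 t2) (im_block_drt n2 l2 b2 r2 t2)
    (im_block_dtt n2 l2 b2 r2 t2) (u 2%nat) (u 3%nat) (v 2%nat) (v 3%nat).

Lemma line_derivative_two_blocks : line_derivative two_blocks two_blocks_dir.
Proof.
  intros x1 x2 x3 x4 u s; unfold two_blocks, two_blocks_dir.
  rewrite (Rplus_assoc (_ + _)).
  apply (is_derive_plus (fun t => im_block n1 l1 b1 (x1 + t * u 0%nat) (x2 + t * u 1%nat)));
    apply is_derive_im_block_line.
Qed.

Lemma line_derivative_two_blocks_dir (v : nat -> R) :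
  line_derivative (two_blocks_dir v) (fun u => two_blocks_dir2 u v).
Proof.
  intros x1 x2 x3 x4 u s; unfold two_blocks_dir, two_blocks_dir2, hess_form.
  eapply is_derive_lincomb4;
    [apply is_derive_im_block_dr_line | apply is_derive_im_block_dt_line
    | apply is_derive_im_block_dr_line | apply is_derive_im_block_dt_line | ring].
Qed.
End TwoBlocks.

Lemma Qpol_two_blocks (p q : nat) (m a : R) :
  Qpol p q (Cpolar m a) = two_blocks p m (a + PI / 2) q 1 (0 + PI / 2).
Proof.
  do 4 (apply functional_extensionality; intro).
  unfold Qpol, Qcart, Pmap, two_blocks, im_block.
  change (?r * cos ?t, ?r * sin ?t) with (Cpolar r t); rewrite !Cpow_Cpolar.
  unfold Cpolar, Cadd, Cmul, Cconj; cbn [fst snd]; expand_trig; ring.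
Qed.

Lemma Rpol_two_blocks (p q : nat) (m a : R) :
  Rpol p q (Cpolar m a) = two_blocks p m a q 1 0.
Proof.
  do 4 (apply functional_extensionality; intro).
  unfold Rpol, Rcart, Pmap, two_blocks, im_block.
  change (?r * cos ?t, ?r * sin ?t) with (Cpolar r t); rewrite !Cpow_Cpolar.
  unfold Cpolar, Cadd, Cmul, Cconj; cbn [fst snd]; expand_trig; ring.
Qed.

Lemma im_block_sub_tan (n : nat) (l b phi r t : R) :
  cos phi <> 0 ->
  im_block n l b r t - sin phi / cos phi * im_block n l (b + PI / 2) r t
  = im_block n (l / cos phi) (b - phi) r t.
Proof. intro Hc; unfold im_block; expand_trig; field; exact Hc. Qed.

Lemma two_blocks_sub_tan (n1 : nat) (l1 b1 : R) (n2 : nat) (l2 b2 phi r1 t1 r2 t2 : R) :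
  cos phi <> 0 ->
  two_blocks n1 l1 b1 n2 l2 b2 r1 t1 r2 t2
  - sin phi / cos phi * two_blocks n1 l1 (b1 + PI / 2) n2 l2 (b2 + PI / 2) r1 t1 r2 t2
  = two_blocks n1 (l1 / cos phi) (b1 - phi) n2 (l2 / cos phi) (b2 - phi) r1 t1 r2 t2.
Proof.
  intro Hc; unfold two_blocks; rewrite <- !im_block_sub_tan by exact Hc; ring.
Qed.

Lemma pd_two_blocks (n1 : nat) (l1 b1 : R) (n2 : nat) (l2 b2 x1 x2 x3 x4 : R) :
  let f := two_blocks n1 l1 b1 n2 l2 b2 in
  pd 1 f x1 x2 x3 x4 = im_block_dr n1 l1 b1 x1 x2
  /\ pd 2 f x1 x2 x3 x4 = im_block_dt n1 l1 b1 x1 x2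
  /\ pd 3 f x1 x2 x3 x4 = im_block_dr n2 l2 b2 x3 x4
  /\ pd 4 f x1 x2 x3 x4 = im_block_dt n2 l2 b2 x3 x4.
Proof.
  intro f; repeat split; (rewrite pd_line_derivative with (Df := two_blocks_dir n1 l1 b1 n2 l2 b2);
    [unfold two_blocks_dir; cbn [unit_dir vec4]; ring | apply line_derivative_two_blocks | lia]).
Qed.

Lemma det3_hess234_newcoords_two_blocks (n1 : nat) (l1 b1 : R) (n2 : nat) (l2 b2 : R)
  (k1 k2 k3 k4 w b c d : R) :
  k1 <> 0 ->
  let r := (w - k2 * b - k3 * c - k4 * d) / k1 in
  det3 (hess234 (newcoords k1 k2 k3 k4 (two_blocks n1 l1 b1 n2 l2 b2)) w b c d)
  = (adj_quad (im_block_drr n1 l1 b1 r b) (im_block_drt n1 l1 b1 r b)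
       (im_block_dtt n1 l1 b1 r b) k1 k2
     * det2 (im_block_drr n2 l2 b2 c d) (im_block_drt n2 l2 b2 c d) (im_block_dtt n2 l2 b2 c d)
     + adj_quad (im_block_drr n2 l2 b2 c d) (im_block_drt n2 l2 b2 c d)
         (im_block_dtt n2 l2 b2 c d) k3 k4
     * det2 (im_block_drr n1 l1 b1 r b) (im_block_drt n1 l1 b1 r b) (im_block_dtt n1 l1 b1 r b))
    / k1 ^ 2.
Proof.
  intros Hk1 r.
  rewrite <- (det3_block_hessian_newcoords k1 k2 k3 k4 _ _ _ _ _ _ Hk1).
  apply det3_ext; intros i j Hi Hj.
  exact (hess234_newcoords _ _ _ k1 k2 k3 k4 w b c d i j
           (line_derivative_two_blocks n1 l1 b1 n2 l2 b2)
           (line_derivative_two_blocks_dir n1 l1 b1 n2 l2 b2) Hi Hj).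
Qed.

(** * Blocks at a critical point *)

(* With T = (n+1) t / 2 and delta = (n-1) t / 2 + b - phi, the phase of the block is
   T + delta + phi; the hypothesis on delta says that it agrees with T + phi modulo PI, and
   then eps = cos delta = +-1. *)
Section CriticalBlock.
Variables (n : nat) (l l' b phi r t : R).
Hypothesis hn : (2 <= n)%nat.
Hypothesis hr : INR n * r ^ pred n = 1.
Hypothesis hdelta : sin ((INR n - 1) / 2 * t + b - phi) = 0.

Local Notation T := ((INR n + 1) / 2 * t).
Local Notation delta := ((INR n - 1) / 2 * t + b - phi).
Local Notation eps := (cos ((INR n - 1) / 2 * t + b - phi)).

Lemma critical_radius_powers : r <> 0 /\ r ^ pred n = / INR n /\ r ^ n = r / INR n
  /\ r ^ pred (pred n) = / (INR n * r) /\ INR (pred n) = INR n - 1.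
Proof.
  assert (Hn : 0 < INR n) by (apply lt_0_INR; lia).
  assert (Hpn : r ^ pred n = r * r ^ pred (pred n))
    by (destruct n as [|[|]]; [lia | lia | reflexivity]).
  assert (Hr : r <> 0) by (intro E; rewrite Hpn, E in hr; lra).
  assert (Hn' : r ^ n = r * r ^ pred n) by (destruct n; [lia | reflexivity]).
  repeat split.
  - exact Hr.
  - rewrite <- (Rmult_1_l (/ INR n)), <- hr; field; lra.
  - unfold Rdiv; rewrite Hn', <- (Rmult_1_l (/ INR n)), <- hr; field; lra.
  - rewrite <- (Rmult_1_l (/ _)), <- hr, Hpn; field; lra.
  - destruct n; [lia|]; simpl pred; rewrite S_INR; ring.
Qed.

Lemma critical_eps_sqr : eps ^ 2 = 1.
Proof.
  replace (eps ^ 2) with (cos delta ^ 2 + sin delta ^ 2) by (rewrite hdelta; ring).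
  apply cos2_sin2.
Qed.

Lemma critical_Re_dr : im_block_dr n l (b + PI / 2) r t = 2 * l * eps * cos phi * cos T.
Proof.
  unfold im_block_dr; rewrite hr.
  replace (INR n * t + (b + PI / 2)) with (T + delta + phi + PI / 2) by field.
  replace (b + PI / 2 - t) with (delta + phi - T + PI / 2) by field.
  set (d := delta) in *; expand_trig; rewrite hdelta; ring.
Qed.

Lemma critical_Re_dt : im_block_dt n l (b + PI / 2) r t = - 2 * l * eps * r * cos phi * sin T.
Proof.
  destruct critical_radius_powers as [Hr [_ [Hrn _]]].
  assert (Hn : INR n <> 0) by (apply not_0_INR; lia).
  unfold im_block_dt; rewrite Hrn.
  replace (INR n * t + (b + PI / 2)) with (T + delta + phi + PI / 2) by field.
  replace (b + PI / 2 - t) with (delta + phi - T + PI / 2) by field.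
  set (d := delta) in *; expand_trig; rewrite hdelta; field; exact Hn.
Qed.

Lemma critical_Im_dr : im_block_dr n l b r t = 2 * l * eps * sin phi * cos T.
Proof.
  unfold im_block_dr; rewrite hr.
  replace (INR n * t + b) with (T + delta + phi) by field.
  replace (b - t) with (delta + phi - T) by field.
  set (d := delta) in *; expand_trig; rewrite hdelta; ring.
Qed.

Lemma critical_Im_hessian :
  im_block_drr n l' (b - phi) r t = l' * (INR n - 1) * eps * sin T / r
  /\ im_block_drt n l' (b - phi) r t = l' * (INR n - 1) * eps * cos T
  /\ im_block_dtt n l' (b - phi) r t = - l' * (INR n - 1) * eps * r * sin T.
Proof.
  destruct critical_radius_powers as [Hr [Hrp [Hrn [Hrpp Hpn]]]].
  assert (Hn : INR n <> 0) by (apply not_0_INR; lia).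
  unfold im_block_drr, im_block_drt, im_block_dtt; rewrite Hrp, Hrn, Hrpp, Hpn.
  replace (INR n * t + (b - phi)) with (T + delta) by field.
  replace (b - phi - t) with (delta - T) by field.
  set (d := delta) in *; expand_trig; rewrite hdelta; repeat split; field; auto.
Qed.

Lemma critical_det2 :
  det2 (im_block_drr n l' (b - phi) r t) (im_block_drt n l' (b - phi) r t)
    (im_block_dtt n l' (b - phi) r t) = - (l' * (INR n - 1)) ^ 2.
Proof.
  destruct critical_radius_powers as [Hr _].
  destruct critical_Im_hessian as [-> [-> ->]].
  unfold det2.
  transitivity (- (l' * (INR n - 1)) ^ 2 * eps ^ 2 * (cos T ^ 2 + sin T ^ 2)); [field; exact Hr|].
  rewrite critical_eps_sqr, cos2_sin2; ring.
Qed.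

Lemma critical_adj_quad :
  adj_quad (im_block_drr n l' (b - phi) r t) (im_block_drt n l' (b - phi) r t)
    (im_block_dtt n l' (b - phi) r t)
    (im_block_dr n l (b + PI / 2) r t) (im_block_dt n l (b + PI / 2) r t)
  = 4 * l' * l ^ 2 * eps * (INR n - 1) * r * cos phi ^ 2 * sin T.
Proof.
  destruct critical_radius_powers as [Hr _].
  destruct critical_Im_hessian as [-> [-> ->]].
  rewrite critical_Re_dr, critical_Re_dt; unfold adj_quad.
  transitivity (4 * l' * l ^ 2 * eps ^ 2 * eps * (INR n - 1) * r * cos phi ^ 2 * sin T
                * (cos T ^ 2 + sin T ^ 2)); [field; exact Hr|].
  rewrite critical_eps_sqr, cos2_sin2; ring.
Qed.
End CriticalBlock.

(** * The determinant of the Hessian *)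

Lemma cos_sin_IZR_PI (k : Z) : cos (IZR k * PI) = powerRZ (-1) k /\ sin (IZR k * PI) = 0.
Proof.
  assert (Hnat : forall n, cos (INR n * PI) = (-1) ^ n /\ sin (INR n * PI) = 0).
  { induction n as [|n [Hc Hs]].
    - simpl; rewrite Rmult_0_l, cos_0, sin_0; split; reflexivity.
    - rewrite S_INR, Rmult_plus_distr_r, Rmult_1_l, neg_cos, neg_sin, Hc, Hs; simpl; split; ring. }
  destruct k as [|n|n]; simpl powerRZ.
  - rewrite Rmult_0_l, cos_0, sin_0; split; reflexivity.
  - change (IZR (Z.pos n)) with (IPR n); rewrite <- INR_IPR; apply Hnat.
  - change (IZR (Z.neg n)) with (- IPR n).
    rewrite <- INR_IPR, Ropp_mult_distr_l_reverse, cos_neg, sin_neg.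
    destruct (Hnat (Pos.to_nat n)) as [-> ->].
    assert (Hsq : (-1) ^ Pos.to_nat n * (-1) ^ Pos.to_nat n = 1)
      by (rewrite <- Rpow_mult_distr; replace (-1 * -1) with 1 by ring; apply pow1).
    split; [|ring].
    rewrite <- (Rmult_1_r (/ _)), <- Hsq; field.
    intro E; rewrite E in Hsq; lra.
Qed.

Lemma det3_hess234_Rhat_two_blocks (p q : nat) (m a r1 t1 r2 t2 e : R) :
  (2 <= p)%nat -> (2 <= q)%nat -> m <> 0 ->
  INR p * r1 ^ pred p = 1 -> INR q * r2 ^ pred q = 1 ->
  let Theta2 := (INR p - 1) / 2 * t1 + a in
  sin ((INR q - 1) / 2 * t2 + 0 - Theta2) = 0 ->
  cos ((INR q - 1) / 2 * t2 + 0 - Theta2) = e ->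
  let Qp := two_blocks p m (a + PI / 2) q 1 (0 + PI / 2) in
  let Rp := two_blocks p m a q 1 0 in
  let k1 := pd 1 Qp r1 t1 r2 t2 in
  let k2 := pd 2 Qp r1 t1 r2 t2 in
  let k3 := pd 3 Qp r1 t1 r2 t2 in
  let k4 := pd 4 Qp r1 t1 r2 t2 in
  k1 <> 0 ->
  let w0 := k1 * r1 + k2 * t1 + k3 * r2 + k4 * t2 in
  let s := pd 1 (newcoords k1 k2 k3 k4 Rp) w0 t1 r2 t2 in
  det3 (hess234 (fun w b c d => newcoords k1 k2 k3 k4 Rp w b c d
                                - s * newcoords k1 k2 k3 k4 Qp w b c d) w0 t1 r2 t2)
  = - (4 * (INR p - 1) * (INR q - 1) * m ^ 2) / (k1 ^ 2 * cos Theta2)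
    * (e * (INR p - 1) * r2 * sin ((INR q + 1) / 2 * t2)
       + (INR q - 1) * m * r1 * sin ((INR p + 1) / 2 * t1)).
Proof.
  intros hp hq Hm Hr1 Hr2 Theta2 Hsv Hcv Qp Rp k1 k2 k3 k4 Hk1 w0 s.
  set (Theta1 := (INR p + 1) / 2 * t1); set (Theta3 := (INR q + 1) / 2 * t2).
  destruct (pd_two_blocks p m (a + PI / 2) q 1 (0 + PI / 2) r1 t1 r2 t2) as [hk1 [hk2 [hk3 hk4]]];
    fold Qp k1 k2 k3 k4 in hk1, hk2, hk3, hk4.
  assert (Hsu : sin ((INR p - 1) / 2 * t1 + a - Theta2) = 0
                /\ cos ((INR p - 1) / 2 * t1 + a - Theta2) = 1)
    by (unfold Theta2; rewrite Rminus_diag, sin_0, cos_0; split; reflexivity).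
  pose proof (critical_Re_dr p m a Theta2 r1 t1 Hr1 (proj1 Hsu)) as k1_val.
  rewrite (proj2 Hsu), <- hk1 in k1_val; fold Theta1 in k1_val.
  assert (Hc1 : cos Theta1 <> 0) by (intro E; apply Hk1; rewrite k1_val, E; ring).
  assert (Hc2 : cos Theta2 <> 0) by (intro E; apply Hk1; rewrite k1_val, E; ring).
  assert (HL : (w0 - k2 * t1 - k3 * r2 - k4 * t2) / k1 = r1) by (unfold w0; field; exact Hk1).
  assert (Hs : s = sin Theta2 / cos Theta2).
  { unfold s, Rp.
    rewrite (pd_newcoords _ _ _ _ _ _ 1 (line_derivative_two_blocks _ _ _ _ _ _)) by lia.
    unfold newcoords, two_blocks_dir; rewrite HL; cbn [newcoords_dir vec4].
    rewrite (critical_Im_dr p m a Theta2 r1 t1 Hr1 (proj1 Hsu)), (proj2 Hsu), k1_val.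
    fold Theta1; field; repeat split; assumption. }
  assert (HRhat : (fun w b c d => newcoords k1 k2 k3 k4 Rp w b c d
                                  - s * newcoords k1 k2 k3 k4 Qp w b c d)
                  = newcoords k1 k2 k3 k4
                      (two_blocks p (m / cos Theta2) (a - Theta2) q (1 / cos Theta2) (0 - Theta2))).
  { do 4 (apply functional_extensionality; intro).
    unfold Rp, Qp, newcoords; rewrite Hs; apply two_blocks_sub_tan, Hc2. }
  rewrite HRhat, (det3_hess234_newcoords_two_blocks _ _ _ _ _ _ _ _ _ _ _ _ _ _ Hk1), HL.
  rewrite hk1, hk2, hk3, hk4.
  rewrite (critical_adj_quad p m (m / cos Theta2) a Theta2 r1 t1 hp Hr1 (proj1 Hsu)),
    (critical_adj_quad q 1 (1 / cos Theta2) 0 Theta2 r2 t2 hq Hr2 Hsv),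
    (critical_det2 p (m / cos Theta2) a Theta2 r1 t1 hp Hr1 (proj1 Hsu)),
    (critical_det2 q (1 / cos Theta2) 0 Theta2 r2 t2 hq Hr2 Hsv),
    (critical_Re_dr p m a Theta2 r1 t1 Hr1 (proj1 Hsu)), (proj2 Hsu), Hcv.
  fold Theta1 Theta3; field; repeat split; assumption.
Qed.

Theorem proposition3p9 (p q : nat) (mu u0 v0 : Cx) (argu0 argv0 argmu : R)
  (kappa : Z)
  (hp : (2 <= p)%nat) (hq : (2 <= q)%nat) (hmu : mu <> (0, 0))
  (hsing : singular_point p q mu u0 v0)
  (hargu0 : u0 = Cpolar (Cnorm u0) argu0)
  (hargv0 : v0 = Cpolar (Cnorm v0) argv0)
  (hargmu : mu = Cpolar (Cnorm mu) argmu)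
  (hkappa : (INR p - 1) / 2 * argu0 + argmu
            = (INR q - 1) / 2 * argv0 + IZR kappa * PI) :
  let r10 := Cnorm u0 in
  let r20 := Cnorm v0 in
  let Qp := Qpol p q mu in
  let Rp := Rpol p q mu in
  let k1 := pd 1 Qp r10 argu0 r20 argv0 in
  let k2 := pd 2 Qp r10 argu0 r20 argv0 in
  let k3 := pd 3 Qp r10 argu0 r20 argv0 in
  let k4 := pd 4 Qp r10 argu0 r20 argv0 in
  k1 <> 0 ->
  let Theta1 := (INR p + 1) / 2 * argu0 in
  let Theta2 := (INR p - 1) / 2 * argu0 + argmu in
  let Theta3 := (INR q + 1) / 2 * argv0 in
  let w0 := k1 * r10 + k2 * argu0 + k3 * r20 + k4 * argv0 in
  let Qn := newcoords k1 k2 k3 k4 Qp in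
  let Rn := newcoords k1 k2 k3 k4 Rp in
  let s := pd 1 Rn w0 argu0 r20 argv0 in
  let Rhat : fun4 := fun a b c d => Rn a b c d - s * Qn a b c d in
  let phi := powerRZ (-1) kappa * (INR p - 1) * r20 * sin Theta3
             + (INR q - 1) * Cnorm mu * r10 * sin Theta1 in
  det3 (hess234 Rhat w0 argu0 r20 argv0)
  = - (4 * (INR p - 1) * (INR q - 1) * Cnorm mu ^ 2) / (k1 ^ 2 * cos Theta2) * phi.
Proof.
  set (m := Cnorm mu).
  assert (Hm : m <> 0).
  { intro E; apply hmu; rewrite hargmu; fold m; rewrite E; unfold Cpolar; f_equal; ring. }
  rewrite hargu0, hargv0, hargmu in hsing.
  destruct (singular_point_polar_radii p q m argmu _ argu0 _ argv0 Hm
              (sqrt_pos _) (sqrt_pos _) hsing) as [Hr1 Hr2].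
  assert (HQ : Qpol p q mu = two_blocks p m (argmu + PI / 2) q 1 (0 + PI / 2))
    by (rewrite hargmu at 1; apply Qpol_two_blocks).
  assert (HR : Rpol p q mu = two_blocks p m argmu q 1 0)
    by (rewrite hargmu at 1; apply Rpol_two_blocks).
  assert (Hv : (INR q - 1) / 2 * argv0 + 0 - ((INR p - 1) / 2 * argu0 + argmu) = - (IZR kappa * PI))
    by (rewrite hkappa; ring).
  destruct (cos_sin_IZR_PI kappa) as [Hcos Hsin].
  cbv zeta; rewrite HQ, HR.
  apply (det3_hess234_Rhat_two_blocks p q m argmu _ argu0 _ argv0 (powerRZ (-1) kappa)
           hp hq Hm Hr1 Hr2);
    cbv zeta; rewrite Hv; [rewrite sin_neg, Hsin | rewrite cos_neg, Hcos]; ring.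
Qed.
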